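(* Let $f$ be a $T$-norm. If $f$ is an Archimedean copula, then $f$ satisfies both property $A$ and property $B$.
   Context: A $T$-norm is a function $f:[0,1]^2\to[0,1]$ that is commutative, associative, monotonic ($x\leq y$ implies $f(x,z)\leq f(y,z)$) and satisfies $f(x,1)=x$. A $T$-norm $f$ is Archimedean if for all $0<x,y<1$ there is $n$ with $x^{\otimes n}\leq y$, where $x^{\otimes n}=f(x,f(x,\dots))$ is the $n$-fold product. A copula is a function $f:[0,1]^2\to[0,1]$ that satisfies neutrality of $1$, is monotonic, and satisfies property $B$. Property $A$: for all $0\leq x\leq y\leq z\leq w\leq 1$, $w+x\leq y+z$ implies $f(x,w)\leq f(y,z)$. Property $B$: for all $0\leq x\leq y\leq1$ and $0\leq z\leq w\leq1$, $f(x,w)-f(x,z)\leq f(y,w)-f(y,z)$. *)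

From Stdlib Require Import Reals.
Open Scope R_scope.

Definition unit_iv (x : R) : Prop := 0 <= x <= 1.

Definition maps_unit_square (f : R -> R -> R) : Prop :=
  forall x y, unit_iv x -> unit_iv y -> unit_iv (f x y).

Definition commutative_on (f : R -> R -> R) : Prop :=
  forall x y, unit_iv x -> unit_iv y -> f x y = f y x.

Definition associative_on (f : R -> R -> R) : Prop :=
  forall x y z, unit_iv x -> unit_iv y -> unit_iv z ->
    f x (f y z) = f (f x y) z.

Definition monotonic_on (f : R -> R -> R) : Prop :=
  forall x y z, unit_iv x -> unit_iv y -> unit_iv z ->
    x <= y -> f x z <= f y z.

Definition right_neutral_one (f : R -> R -> R) : Prop :=
  forall x, unit_iv x -> f x 1 = x.

(* neutrality of 1 (two-sided, as copulas need not be commutative) *)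
Definition neutral_one (f : R -> R -> R) : Prop :=
  forall x, unit_iv x -> f x 1 = x /\ f 1 x = x.

Definition is_Tnorm (f : R -> R -> R) : Prop :=
  maps_unit_square f /\ commutative_on f /\ associative_on f /\
  monotonic_on f /\ right_neutral_one f.

(* n-fold product: tpow f x n = x^{(x) (n+1)}, i.e. n+1 factors *)
Fixpoint tpow (f : R -> R -> R) (x : R) (n : nat) : R :=
  match n with
  | O => x
  | S m => f x (tpow f x m)
  end.

Definition archimedean (f : R -> R -> R) : Prop :=
  forall x y, 0 < x < 1 -> 0 < y < 1 -> exists n : nat, tpow f x n <= y.

Definition propB (f : R -> R -> R) : Prop :=
  forall x y z w, 0 <= x -> x <= y -> y <= 1 -> 0 <= z -> z <= w -> w <= 1 ->
    f x w - f x z <= f y w - f y z.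

Definition is_copula (f : R -> R -> R) : Prop :=
  maps_unit_square f /\ neutral_one f /\ monotonic_on f /\ propB f.

Definition propA (f : R -> R -> R) : Prop :=
  forall x y z w, 0 <= x -> x <= y -> y <= z -> z <= w -> w <= 1 ->
    w + x <= y + z -> f x w <= f y z.

(* A copula T-norm T is nondecreasing and 1-Lipschitz in each argument, so by
   the intermediate value theorem every 0 <= x <= y <= 1 can be written
   x = T(y, c).  Property B with the neutrality of 1 gives
   T(c, w) <= T(c, y) + (w - y) = x + w - y <= z, and associativity then yields
   T(x, w) = T(y, T(c, w)) <= T(y, z), which is property A. *)

From Stdlib Require Import Reals Lra.
Open Scope R_scope.

Lemma continuity_nondecreasing_1_lipschitz (g : R -> R) :
  (forall a b, a <= b -> 0 <= g b - g a <= b - a) -> continuity g.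
Proof.
  intros Hg a eps Heps.
  exists eps; split; [exact Heps |].
  intros b [_ Hb]; simpl in *; unfold Rdist in *.
  destruct (Rle_dec a b) as [Hab | Hab].
  - pose proof (Hg a b Hab); unfold Rabs in *; repeat destruct Rcase_abs; lra.
  - pose proof (Hg b a ltac:(lra)); unfold Rabs in *; repeat destruct Rcase_abs; lra.
Qed.

(* [IVT_cor] needs continuity on all of R; clamping extends a function on [0, 1]. *)
Definition clamp01 (c : R) : R := Rmax 0 (Rmin 1 c).

Lemma clamp01_unit c : unit_iv (clamp01 c).
Proof. unfold clamp01, unit_iv, Rmax, Rmin; repeat destruct Rle_dec; lra. Qed.

Lemma clamp01_id c : unit_iv c -> clamp01 c = c.
Proof. unfold clamp01, unit_iv, Rmax, Rmin; intros; repeat destruct Rle_dec; lra. Qed.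

Lemma clamp01_increment a b : a <= b -> 0 <= clamp01 b - clamp01 a <= b - a.
Proof. unfold clamp01, Rmax, Rmin; intros; repeat destruct Rle_dec; lra. Qed.

Section Copula.

Variable f : R -> R -> R.
Hypothesis f_neutral : neutral_one f.
Hypothesis f_propB : propB f.

Lemma copula_increment_r_le y a b :
  unit_iv y -> 0 <= a -> a <= b -> b <= 1 -> f y b - f y a <= b - a.
Proof.
  intros [Hy0 Hy1] Ha Hab Hb.
  destruct (f_neutral a ltac:(split; lra)) as [_ E1a].
  destruct (f_neutral b ltac:(split; lra)) as [_ E1b].
  pose proof (f_propB y 1 a b Hy0 Hy1 ltac:(lra) Ha Hab Hb); lra.
Qed.

End Copula.

Section TNorm.

Variable f : R -> R -> R.
Hypothesis f_maps : maps_unit_square f.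
Hypothesis f_comm : commutative_on f.
Hypothesis f_assoc : associative_on f.
Hypothesis f_mono : monotonic_on f.
Hypothesis f_neutral_r : right_neutral_one f.
Hypothesis f_neutral : neutral_one f.
Hypothesis f_propB : propB f.

Lemma tnorm_mono_r y a b :
  unit_iv y -> unit_iv a -> unit_iv b -> a <= b -> f y a <= f y b.
Proof.
  intros Hy Ha Hb Hab.
  rewrite (f_comm y a Hy Ha), (f_comm y b Hy Hb); exact (f_mono a b y Ha Hb Hy Hab).
Qed.

Lemma tnorm_0_r y : unit_iv y -> f y 0 = 0.
Proof.
  intros Hy.
  assert (U0 : unit_iv 0) by (unfold unit_iv; lra).
  assert (U1 : unit_iv 1) by (unfold unit_iv; lra).
  pose proof (tnorm_mono_r 0 y 1 U0 Hy U1 (proj2 Hy)) as Hle.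
  rewrite (f_neutral_r 0 U0), (f_comm 0 y U0 Hy) in Hle.
  pose proof (f_maps y 0 Hy U0) as [Hge _]; lra.
Qed.

Lemma copula_tnorm_continuity_r y :
  unit_iv y -> continuity (fun c => f y (clamp01 c)).
Proof.
  intros Hy; apply continuity_nondecreasing_1_lipschitz; intros a b Hab.
  pose proof (clamp01_increment a b Hab) as Hc.
  pose proof (clamp01_unit a) as [Ha0 Ha1].
  pose proof (clamp01_unit b) as [Hb0 Hb1].
  pose proof (tnorm_mono_r y (clamp01 a) (clamp01 b) Hy
                (clamp01_unit a) (clamp01_unit b) ltac:(lra)).
  pose proof (copula_increment_r_le f f_neutral f_propB y (clamp01 a) (clamp01 b)
                Hy Ha0 ltac:(lra) Hb1).
  lra.
Qed.

Lemma copula_tnorm_surj_r x y :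
  0 <= x -> x <= y -> y <= 1 -> exists c, unit_iv c /\ f y c = x.
Proof.
  intros Hx Hxy Hy1.
  assert (Uy : unit_iv y) by (unfold unit_iv; lra).
  assert (U0 : unit_iv 0) by (unfold unit_iv; lra).
  assert (U1 : unit_iv 1) by (unfold unit_iv; lra).
  set (h := fun c => f y (clamp01 c) - x).
  assert (Ch : continuity h).
  { apply continuity_minus; [exact (copula_tnorm_continuity_r y Uy) |
                             apply continuity_const; intros ? ?; reflexivity]. }
  assert (Hsign : h 0 * h 1 <= 0).
  { unfold h; rewrite (clamp01_id 0 U0), (clamp01_id 1 U1),
      (tnorm_0_r y Uy), (f_neutral_r y Uy); nra. }
  destruct (IVT_cor h 0 1 Ch ltac:(lra) Hsign) as [c [Hc Hhc]].
  exists c; split; [exact Hc |].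
  unfold h in Hhc; rewrite (clamp01_id c Hc) in Hhc; lra.
Qed.

Lemma copula_tnorm_propA : propA f.
Proof.
  intros x y z w Hx Hxy Hyz Hzw Hw1 Hsum.
  assert (Uy : unit_iv y) by (unfold unit_iv; lra).
  assert (Uz : unit_iv z) by (unfold unit_iv; lra).
  assert (Uw : unit_iv w) by (unfold unit_iv; lra).
  destruct (copula_tnorm_surj_r x y Hx Hxy ltac:(lra)) as [c [Uc <-]].
  assert (Hcw : f c w <= z).
  { pose proof (copula_increment_r_le f f_neutral f_propB c y w
                  Uc ltac:(lra) ltac:(lra) Hw1) as Hinc.
    rewrite (f_comm c y Uc Uy) in Hinc; lra. }
  rewrite <- (f_assoc y c w Uy Uc Uw).
  exact (tnorm_mono_r y (f c w) z Uy (f_maps c w Uc Uw) Uz Hcw).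
Qed.

End TNorm.

Theorem corollary3 (f : R -> R -> R) :
  is_Tnorm f -> is_copula f -> archimedean f -> propA f /\ propB f.
Proof.
  intros [Hmap [Hcom [Hass [Hmon Hrn]]]] [_ [Hneu [_ HB]]] _.
  split; [exact (copula_tnorm_propA f Hmap Hcom Hass Hmon Hrn Hneu HB) | exact HB].
Qed.
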